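(* (i) For all $\tau\in\mathbb{H}$ with $e^{-2\pi\operatorname{Im}\tau}\le\frac13$, $$|\Delta(\tau)|\ge e^{-2\pi\operatorname{Im}\tau}\Big(1-e^{-2\pi\operatorname{Im}\tau}-e^{-4\pi\operatorname{Im}\tau}-\frac{2e^{-4\pi\operatorname{Im}\tau}}{1-e^{-2\pi\operatorname{Im}\tau}}\Big)^{24}.$$ (ii) For all $\tau\in\mathbb{H}$, $$|\Delta(\tau)|\le e^{-2\pi\operatorname{Im}\tau}\Big(1+2e^{-2\pi\operatorname{Im}\tau}+\frac{2e^{-8\pi\operatorname{Im}\tau}}{1-e^{-4\pi\operatorname{Im}\tau}}\Big)^{24}.$$
   Context: $\mathbb{H}$ is the upper half plane, $q=e^{2\pi i\tau}$, and $\Delta(\tau)=q\prod_{n\ge1}(1-q^n)^{24}$. *)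

From Stdlib Require Import Reals.
From Coquelicot Require Import Coquelicot.
Open Scope R_scope.

Definition Cexp (z : C) : C :=
  (exp (Re z) * cos (Im z), exp (Re z) * sin (Im z)).

Definition qpar (tau : C) : C := Cexp (Cmult (0, 2 * PI) tau).

Fixpoint eta_partial (q : C) (N : nat) : C :=
  match N with
  | O => RtoC 1
  | S M => Cmult (eta_partial q M) (Cpow (Cminus (RtoC 1) (Cpow q (S M))) 24)
  end.

Definition Delta_partial (tau : C) (N : nat) : C :=
  Cmult (qpar tau) (eta_partial (qpar tau) N).

Definition is_Delta (tau : C) (D : C) : Prop :=
  filterlim (Delta_partial tau) eventually (locally D).

(* Let q = e^{2 pi i tau} and r = |q| = e^{-2 pi Im tau} < 1.  The partial
   products P_n = prod_{j=1}^{n} (1 - q^j) converge to some eta, because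
   |P_{n+1} - P_n| = |P_n| r^{n+1} and |P_n| <= exp (r / (1 - r)); then
   Delta(tau) = q eta^24 and both bounds are bounds on |eta|.
   Lower bound: |P_n| >= 1 - sum_{j>=1} r^j = 1 - r / (1 - r).
   Upper bound: the finite form of Euler's pentagonal number theorem
     sum_{k=0}^{n} (-1)^k q^{nk + k(k+1)/2} prod_{j=k+1}^{n} (1 - q^j)
       = sum_{|m| <= n} (-1)^m q^{m(3m-1)/2},
   proved by telescoping in n, exhibits P_n (the k = 0 term) as a partial
   pentagonal sum up to an error O(r^n).  Hence
   |eta| <= 1 + r + r^2 + 2 sum_{m>=2} r^{2m} <= 1 + 2r + 2r^4 / (1 - r^2). *)

From Stdlib Require Import Reals Lia Lra.
From Coquelicot Require Import Coquelicot.
Open Scope R_scope.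

Section PentagonalIdentity.
Local Open Scope C_scope.

Lemma sum_Sn_C (a : nat -> C) (n : nat) : (sum_n a (S n) : C) = sum_n a n + a (S n).
Proof. exact (sum_Sn a n). Qed.

Lemma sum_Sn_l_C (a : nat -> C) (n : nat) :
  (sum_n a (S n) : C) = a 0%nat + sum_n (fun k => a (S k)) n.
Proof. unfold sum_n; rewrite sum_Sn_m, sum_n_m_S by lia; reflexivity. Qed.

Lemma sum_n_alternating_telescope (X Y : nat -> C) (n : nat) :
  Y 0%nat = 0 -> (forall k, (k < n)%nat -> Y (S k) = X k) ->
  (sum_n (fun k => (- 1) ^ k * (Y k + X k)) n : C) = (- 1) ^ n * X n.
Proof.
  intros Y0 YX; induction n as [|n IH].
  - rewrite sum_O, Y0; ring.
  - rewrite sum_Sn_C, IH by (intros; apply YX; lia).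
    rewrite YX by lia; simpl; ring.
Qed.

Fixpoint triangular (k : nat) : nat :=
  match k with O => O | S j => (triangular j + S j)%nat end.

Lemma triangular_ge k : (k <= triangular k)%nat.
Proof. induction k; simpl; lia. Qed.

(* qprod q k n = prod_{j=k+1}^{n} (1 - q^j), the empty product when n <= k. *)
Fixpoint qprod (q : C) (k n : nat) : C :=
  match n with
  | O => 1
  | S m => if Nat.leb k m then qprod q k m * (1 - q ^ S m) else 1
  end.

Lemma qprod_diag q n : qprod q n n = 1.
Proof. destruct n as [|n]; cbn [qprod]; [|rewrite (proj2 (Nat.leb_gt (S n) n))]; auto. Qed.

Lemma qprod_S q k n : (k <= n)%nat -> qprod q k (S n) = qprod q k n * (1 - q ^ S n).
Proof. intros Hkn; cbn [qprod]; rewrite (proj2 (Nat.leb_le k n) Hkn); reflexivity. Qed.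

Lemma qprod_shift q k n : (k < n)%nat -> qprod q k n = (1 - q ^ S k) * qprod q (S k) n.
Proof.
  induction n as [|n IH]; intros Hkn; [lia|].
  destruct (Nat.eq_dec k n) as [->|Hne].
  - rewrite qprod_S, !qprod_diag by lia; ring.
  - rewrite !qprod_S, IH by lia; ring.
Qed.

Definition euler_term (q : C) (n k : nat) : C :=
  (- 1) ^ k * q ^ (n * k + triangular k) * qprod q k n.

(* The exponents are the generalized pentagonal numbers m(3m-1)/2 and m(3m+1)/2. *)
Fixpoint pentagonal_sum (q : C) (n : nat) : C :=
  match n with
  | O => 1
  | S m => pentagonal_sum q m
      + (- 1) ^ S m * (q ^ (triangular m + S m * S m) + q ^ (S m * S m + triangular (S m)))
  end.

Lemma sum_euler_term q n : (sum_n (euler_term q n) n : C) = pentagonal_sum q n.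
Proof.
  induction n as [|n IH].
  - rewrite sum_O; unfold euler_term; simpl; ring.
  - set (X k := q ^ (triangular k + S n * k + S n) * qprod q k n).
    set (Y k := q ^ (triangular k + n * k) * (1 - q ^ k) * qprod q k n).
    assert (Hterm : forall k, (k <= n)%nat ->
              euler_term q (S n) k + (- 1) ^ k * (Y k + X k) = euler_term q n k).
    { intros k Hk; unfold euler_term, X, Y; rewrite qprod_S by lia.
      replace (S n * k + triangular k)%nat with (triangular k + n * k + k)%nat by lia.
      replace (n * k + triangular k)%nat with (triangular k + n * k)%nat by lia.
      replace (triangular k + S n * k + S n)%nat with (triangular k + n * k + k + S n)%nat by lia.
      rewrite !Cpow_add_r; ring. }
    assert (Hstep : sum_n (euler_term q (S n)) n
                    + sum_n (fun k => (- 1) ^ k * (Y k + X k)) n = pentagonal_sum q n).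
    { rewrite <- IH; etransitivity; [symmetry; exact (sum_n_plus _ _ n)|].
      apply sum_n_ext_loc; exact Hterm. }
    rewrite sum_n_alternating_telescope in Hstep.
    + rewrite sum_Sn_C; simpl pentagonal_sum; rewrite <- Hstep.
      unfold euler_term, X; rewrite !qprod_diag.
      replace (triangular n + S n * n + S n)%nat with (triangular n + S n * S n)%nat by lia.
      simpl; ring.
    + unfold Y; simpl; ring.
    + intros k Hk; unfold X, Y; rewrite (qprod_shift q k n Hk).
      replace (triangular (S k) + n * S k)%nat with (triangular k + S n * k + S n)%nat
        by (simpl; lia).
      ring.
Qed.

End PentagonalIdentity.

Lemma pow_antitone (r : R) (a b : nat) : 0 <= r <= 1 -> (b <= a)%nat -> r ^ a <= r ^ b.
Proof.
  intros Hr Hab; induction Hab as [|a _ IH]; [lra|].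
  simpl; pose proof (pow_le r a (proj1 Hr)); nra.
Qed.

Lemma geom_partial_S (r : R) (n : nat) : r <> 1 ->
  r * (1 - r ^ S n) / (1 - r) = r * (1 - r ^ n) / (1 - r) + r ^ S n.
Proof. intros Hr; simpl; field; lra. Qed.

Lemma geom_partial_bounds (r : R) (n : nat) : 0 <= r < 1 ->
  0 <= r * (1 - r ^ n) / (1 - r) <= r / (1 - r).
Proof.
  intros Hr; pose proof (pow_le r n (proj1 Hr)).
  assert (r ^ n <= 1) by (apply (pow_antitone r n 0); lra || lia).
  unfold Rdiv; split.
  - apply Rmult_le_pos; [nra | apply Rlt_le, Rinv_0_lt_compat; lra].
  - apply Rmult_le_compat_r; [apply Rlt_le, Rinv_0_lt_compat; lra | nra].
Qed.

Lemma sum_n_geom (r : R) (n : nat) : sum_n (fun k => r ^ k) n * (1 - r) = 1 - r ^ S n.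
Proof.
  induction n as [|n IH].
  - rewrite sum_O; simpl; ring.
  - rewrite sum_Sn; unfold plus; simpl in *; nra.
Qed.

Lemma Cmod_sum_n_le_geom (f : nat -> C) (c r : R) (n : nat) : 0 <= r < 1 ->
  (forall k, Cmod (f k) <= c * r ^ k) -> Cmod (sum_n f n) <= c / (1 - r).
Proof.
  intros Hr Hf.
  assert (Hc : 0 <= c)
    by (pose proof (Hf 0%nat); pose proof (Cmod_ge_0 (f 0%nat)); simpl in *; lra).
  assert (Hgeom : sum_n (fun k => r ^ k) n <= / (1 - r)).
  { pose proof (sum_n_geom r n); pose proof (pow_le r (S n) (proj1 Hr)).
    apply (Rmult_le_reg_r (1 - r)); [lra|]; rewrite Rinv_l; lra. }
  apply Rle_trans with (sum_n (fun k => Cmod (f k)) n);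
    [exact (norm_sum_n_m (V := C_NormedModule) f 0 n)|].
  eapply Rle_trans; [apply (sum_n_m_le _ (fun k => c * r ^ k)); exact Hf|].
  change (sum_n (fun k => mult c (r ^ k)) n <= c / (1 - r)).
  rewrite sum_n_mult_l; unfold Rdiv; apply Rmult_le_compat_l; assumption.
Qed.

Lemma filterlim_of_summable_increments (u : nat -> C) :
  ex_series (fun k => (u (S k) - u k)%C) -> exists l, filterlim u eventually (locally l).
Proof.
  intros [s Hs].
  assert (Htel : forall n, u (S n) = (sum_n (fun k => (u (S k) - u k)%C) n + u 0%nat)%C).
  { induction n as [|n IH]; [rewrite sum_O; ring|].
    rewrite sum_Sn_C, Cplus_comm, Cplus_assoc, (Cplus_comm (u 0%nat)), <- IH; ring. }
  exists (plus s (u 0%nat)).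
  assert (Hshift : filterlim (fun n => u (S n)) eventually (locally (plus s (u 0%nat)))).
  { apply (filterlim_ext (fun n => plus (sum_n (fun k => (u (S k) - u k)%C) n) (u 0%nat)));
      [intros n; symmetry; apply Htel|].
    eapply filterlim_comp_2; [exact Hs | apply filterlim_const |].
    exact (filterlim_plus (V := C_NormedModule) s (u 0%nat)). }
  intros P HP; destruct (Hshift P HP) as [N HN].
  exists (S N); intros [|n] Hn; [lia | apply HN; lia].
Qed.

Lemma is_lim_seq_Cmod (u : nat -> C) (l : C) :
  filterlim u eventually (locally l) -> is_lim_seq (fun n => Cmod (u n)) (Cmod l).
Proof.
  intros Hu; exact (filterlim_comp _ _ _ u norm _ _ _ Hu (filterlim_norm (V := C_NormedModule) l)).
Qed.

Lemma Cmod_limit_le (u : nat -> C) (b : nat -> R) (l : C) (B : R) :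
  filterlim u eventually (locally l) -> is_lim_seq b B ->
  (forall n, Cmod (u n) <= b n) -> Cmod l <= B.
Proof. intros Hu Hb Hle; exact (is_lim_seq_le _ _ _ _ Hle (is_lim_seq_Cmod u l Hu) Hb). Qed.

Lemma Cmod_limit_ge (u : nat -> C) (l : C) (c : R) :
  filterlim u eventually (locally l) -> (forall n, c <= Cmod (u n)) -> c <= Cmod l.
Proof.
  intros Hu Hle; exact (is_lim_seq_le _ _ _ _ Hle (is_lim_seq_const c) (is_lim_seq_Cmod u l Hu)).
Qed.

Lemma filterlim_Cmult {T : Type} {F : (T -> Prop) -> Prop} {FF : Filter F}
  (f g : T -> C) (x y : C) :
  filterlim f F (locally x) -> filterlim g F (locally y) ->
  filterlim (fun t => (f t * g t)%C) F (locally (x * y)%C).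
Proof.
  intros Hf Hg.
  assert (Hf' : filterlim f F (locally (T := AbsRing_UniformSpace C_AbsRing) x))
    by (intros P HP; apply Hf, locally_C, HP).
  exact (filterlim_comp_2 f g _ Hf' Hg (filterlim_scal (V := C_NormedModule) x y)).
Qed.

Lemma filterlim_Cpow {T : Type} {F : (T -> Prop) -> Prop} {FF : Filter F}
  (f : T -> C) (x : C) (n : nat) :
  filterlim f F (locally x) -> filterlim (fun t => (f t ^ n)%C) F (locally (x ^ n)%C).
Proof.
  intros Hf; induction n as [|n IH]; [apply filterlim_const | apply filterlim_Cmult; assumption].
Qed.

Section Bounds.

Variables (q : C) (r : R).
Hypothesis q_norm : Cmod q = r.
Hypothesis r_lt_1 : r < 1.

Lemma r_ge_0 : 0 <= r.
Proof. rewrite <- q_norm; apply Cmod_ge_0. Qed.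

Lemma Cmod_1_sub_pow_le n : Cmod (1 - q ^ n) <= 1 + r ^ n.
Proof.
  unfold Cminus; eapply Rle_trans; [apply Cmod_triangle|].
  rewrite Cmod_opp, Cmod_pow, Cmod_1, q_norm; lra.
Qed.

Lemma Cmod_1_sub_pow_ge n : 1 - r ^ n <= Cmod (1 - q ^ n).
Proof.
  pose proof (Cmod_triangle (1 - q ^ n) (q ^ n)) as Htri.
  replace (1 - q ^ n + q ^ n)%C with (RtoC 1) in Htri by ring.
  rewrite Cmod_1, Cmod_pow, q_norm in Htri; lra.
Qed.

Lemma Cmod_qprod_le_exp k n : Cmod (qprod q k n) <= exp (r * (1 - r ^ n) / (1 - r)).
Proof.
  pose proof r_ge_0.
  induction n as [|n IH].
  - simpl; rewrite Cmod_1; replace (r * (1 - 1) / (1 - r)) with 0 by (field; lra).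
    rewrite exp_0; lra.
  - rewrite geom_partial_S, exp_plus by lra.
    assert (Hexp : 1 <= exp (r ^ S n)).
    { pose proof (exp_ineq1_le (r ^ S n)); pose proof (pow_le r (S n) r_ge_0); lra. }
    destruct (Nat.le_gt_cases k n) as [Hkn|Hnk].
    + rewrite qprod_S, Cmod_mult by exact Hkn.
      apply Rmult_le_compat; try apply Cmod_ge_0; [exact IH|].
      eapply Rle_trans; [apply Cmod_1_sub_pow_le | apply exp_ineq1_le].
    + cbn [qprod]; rewrite (proj2 (Nat.leb_gt k n) Hnk), Cmod_1.
      pose proof (geom_partial_bounds r n (conj r_ge_0 r_lt_1)).
      pose proof (exp_ineq1_le (r * (1 - r ^ n) / (1 - r))); nra.
Qed.

Lemma Cmod_qprod_le k n : Cmod (qprod q k n) <= exp (r / (1 - r)).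
Proof.
  eapply Rle_trans; [apply Cmod_qprod_le_exp|].
  destruct (geom_partial_bounds r n (conj r_ge_0 r_lt_1)) as [_ Hle].
  destruct (Rle_lt_or_eq_dec _ _ Hle) as [Hlt|Heq];
    [left; apply exp_increasing, Hlt | rewrite Heq; lra].
Qed.

Lemma Cmod_qprod0_ge_geom n : 1 - r * (1 - r ^ n) / (1 - r) <= Cmod (qprod q 0 n).
Proof.
  pose proof r_ge_0.
  induction n as [|n IH].
  - simpl; rewrite Cmod_1; replace (r * (1 - 1) / (1 - r)) with 0 by (field; lra); lra.
  - rewrite geom_partial_S, qprod_S, Cmod_mult by (lra || lia).
    pose proof (Cmod_1_sub_pow_ge (S n)); pose proof (Cmod_ge_0 (qprod q 0 n)).
    pose proof (geom_partial_bounds r n (conj r_ge_0 r_lt_1)).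
    pose proof (pow_le r (S n) r_ge_0).
    assert (r ^ S n <= 1) by (apply (pow_antitone r (S n) 0); lra || lia).
    assert (Cmod (qprod q 0 n) * (1 - r ^ S n) <= Cmod (qprod q 0 n) * Cmod (1 - q ^ S n))
      by (apply Rmult_le_compat_l; lra).
    nra.
Qed.

Lemma Cmod_qprod0_ge n : 1 - r / (1 - r) <= Cmod (qprod q 0 n).
Proof.
  pose proof (geom_partial_bounds r n (conj r_ge_0 r_lt_1)).
  pose proof (Cmod_qprod0_ge_geom n); lra.
Qed.

Lemma Cmod_signed_pow_sum_le m a b : Cmod ((- 1) ^ m * (q ^ a + q ^ b))%C <= r ^ a + r ^ b.
Proof.
  rewrite Cmod_mult, Cmod_pow, Cmod_R.
  replace (Rabs (-1)) with 1 by (rewrite Rabs_left; lra).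
  rewrite pow1, Rmult_1_l.
  eapply Rle_trans; [apply Cmod_triangle|]; rewrite !Cmod_pow, q_norm; lra.
Qed.

Lemma Cmod_pentagonal_sum_S_le n :
  Cmod (pentagonal_sum q (S n)) <= 1 + r + r ^ 2 + 2 * (r ^ 4 - r ^ (2 * n + 4)) / (1 - r ^ 2).
Proof.
  pose proof r_ge_0.
  assert (Hr2 : 0 < 1 - r ^ 2) by nra.
  induction n as [|n IH].
  - eapply Rle_trans; [apply (Cmod_triangle (pentagonal_sum q 0))|].
    simpl pentagonal_sum; rewrite Cmod_1.
    pose proof (Cmod_signed_pow_sum_le 1 (0 + 1 * 1) (1 * 1 + 1)).
    replace (2 * (r ^ 4 - r ^ (2 * 0 + 4)) / (1 - r ^ 2)) with 0 by (simpl; field; lra).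
    simpl in *; lra.
  - eapply Rle_trans; [apply (Cmod_triangle (pentagonal_sum q (S n)))|].
    set (m := S (S n)).
    assert (r ^ (triangular (S n) + m * m) <= r ^ (2 * n + 4))
      by (apply pow_antitone; [lra | unfold m; nia]).
    assert (r ^ (m * m + triangular m) <= r ^ (2 * n + 4))
      by (apply pow_antitone; [lra | unfold m; nia]).
    pose proof (Cmod_signed_pow_sum_le m (triangular (S n) + m * m) (m * m + triangular m)).
    replace (2 * S n + 4)%nat with (2 * n + 4 + 2)%nat by lia.
    rewrite pow_add.
    replace (2 * (r ^ 4 - r ^ (2 * n + 4) * r ^ 2) / (1 - r ^ 2))
      with (2 * (r ^ 4 - r ^ (2 * n + 4)) / (1 - r ^ 2) + 2 * r ^ (2 * n + 4)) by (field; lra).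
    lra.
Qed.

Lemma Cmod_pentagonal_sum_le n : Cmod (pentagonal_sum q n) <= 1 + 2 * r + 2 * r ^ 4 / (1 - r ^ 2).
Proof.
  pose proof r_ge_0.
  assert (Hr2 : 0 < 1 - r ^ 2) by nra.
  assert (0 <= 2 * r ^ 4 / (1 - r ^ 2))
    by (apply Rmult_le_pos; [pose proof (pow_le r 4 r_ge_0) | apply Rlt_le, Rinv_0_lt_compat]; lra).
  destruct n as [|n].
  - cbn [pentagonal_sum]; rewrite Cmod_1; lra.
  - eapply Rle_trans; [apply Cmod_pentagonal_sum_S_le|].
    assert (0 <= 2 * r ^ (2 * n + 4) / (1 - r ^ 2))
      by (apply Rmult_le_pos; [pose proof (pow_le r (2 * n + 4) r_ge_0)
                              | apply Rlt_le, Rinv_0_lt_compat]; lra).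
    replace (2 * (r ^ 4 - r ^ (2 * n + 4)) / (1 - r ^ 2))
      with (2 * r ^ 4 / (1 - r ^ 2) - 2 * r ^ (2 * n + 4) / (1 - r ^ 2)) by (field; lra).
    assert (r ^ 2 <= r) by (simpl; nra).
    lra.
Qed.

Lemma Cmod_qprod0_sub_pentagonal_le n :
  Cmod (qprod q 0 n - pentagonal_sum q n) <= exp (r / (1 - r)) * r ^ S n / (1 - r).
Proof.
  pose proof r_ge_0.
  assert (Hpos : 0 <= exp (r / (1 - r)) * r ^ S n / (1 - r)).
  { apply Rmult_le_pos; [apply Rmult_le_pos; [apply Rlt_le, exp_pos | apply pow_le; lra] |].
    apply Rlt_le, Rinv_0_lt_compat; lra. }
  destruct n as [|n].
  - replace (qprod q 0 0 - pentagonal_sum q 0)%C with (RtoC 0) by (simpl; ring).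
    rewrite Cmod_0; exact Hpos.
  - rewrite <- sum_euler_term, sum_Sn_l_C.
    replace (euler_term q (S n) 0) with (qprod q 0 (S n))
      by (unfold euler_term; rewrite Nat.mul_0_r; simpl; ring).
    replace (qprod q 0 (S n) - (qprod q 0 (S n) + sum_n (fun k => euler_term q (S n) (S k)) n))%C
      with (- sum_n (fun k => euler_term q (S n) (S k)) n)%C by ring.
    rewrite Cmod_opp.
    apply Cmod_sum_n_le_geom; [lra|]; intros k.
    unfold euler_term; rewrite !Cmod_mult, !Cmod_pow, Cmod_R, q_norm.
    replace (Rabs (-1)) with 1 by (rewrite Rabs_left; lra).
    rewrite pow1, Rmult_1_l, Rmult_comm, Rmult_assoc.
    apply Rmult_le_compat; [apply Cmod_ge_0 | apply pow_le; lra | apply Cmod_qprod_le |].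
    rewrite <- pow_add; apply pow_antitone; [lra|].
    pose proof (triangular_ge (S k)); nia.
Qed.

Lemma ex_lim_qprod0 : exists eta, filterlim (qprod q 0) eventually (locally eta).
Proof.
  pose proof r_ge_0.
  apply filterlim_of_summable_increments.
  apply (ex_series_le (V := C_CompleteNormedModule) _ (fun k => exp (r / (1 - r)) * r * r ^ k)).
  - intros k; change (Cmod (qprod q 0 (S k) - qprod q 0 k)%C <= exp (r / (1 - r)) * r * r ^ k).
    rewrite qprod_S by lia.
    replace (qprod q 0 k * (1 - q ^ S k) - qprod q 0 k)%C with (- (qprod q 0 k * q ^ S k))%C
      by ring.
    rewrite Cmod_opp, Cmod_mult, Cmod_pow, q_norm, Rmult_assoc; change (r * r ^ k) with (r ^ S k).
    apply Rmult_le_compat_r; [apply pow_le; lra | apply Cmod_qprod_le].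
  - apply (ex_series_scal_l (V := R_NormedModule) _ (fun k => r ^ k)), ex_series_geom.
    rewrite Rabs_pos_eq; lra.
Qed.

Lemma Cmod_lim_qprod0_ge eta : filterlim (qprod q 0) eventually (locally eta) ->
  1 - r / (1 - r) <= Cmod eta.
Proof. intros Heta; exact (Cmod_limit_ge _ _ _ Heta Cmod_qprod0_ge). Qed.

Lemma Cmod_lim_qprod0_le eta : filterlim (qprod q 0) eventually (locally eta) ->
  Cmod eta <= 1 + 2 * r + 2 * r ^ 4 / (1 - r ^ 2).
Proof.
  intros Heta; pose proof r_ge_0.
  set (B := 1 + 2 * r + 2 * r ^ 4 / (1 - r ^ 2)).
  set (c := exp (r / (1 - r)) * r / (1 - r)).
  apply (Cmod_limit_le _ (fun n => B + c * r ^ n) _ _ Heta).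
  - assert (Hlim : is_lim_seq (fun n => B + c * r ^ n) (B + c * 0)).
    { apply is_lim_seq_plus'; [apply is_lim_seq_const|].
      apply (is_lim_seq_scal_l _ c 0), is_lim_seq_geom; rewrite Rabs_pos_eq; lra. }
    rewrite Rmult_0_r, Rplus_0_r in Hlim; exact Hlim.
  - intros n.
    replace (qprod q 0 n) with (pentagonal_sum q n + (qprod q 0 n - pentagonal_sum q n))%C by ring.
    eapply Rle_trans; [apply Cmod_triangle|].
    apply Rplus_le_compat; [apply Cmod_pentagonal_sum_le|].
    eapply Rle_trans; [apply Cmod_qprod0_sub_pentagonal_le|]; unfold c; simpl; lra.
Qed.

End Bounds.

Lemma Cmod_Cexp z : Cmod (Cexp z) = exp (Re z).
Proof.
  unfold Cexp, Cmod; simpl fst; simpl snd.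
  replace ((exp (Re z) * cos (Im z)) ^ 2 + (exp (Re z) * sin (Im z)) ^ 2)
    with (exp (Re z) ^ 2 * ((sin (Im z))² + (cos (Im z))²)) by (unfold Rsqr; ring).
  rewrite sin2_cos2, Rmult_1_r; apply sqrt_pow2, Rlt_le, exp_pos.
Qed.

Lemma Cmod_qpar tau : Cmod (qpar tau) = exp (-2 * PI * Im tau).
Proof. unfold qpar; rewrite Cmod_Cexp; f_equal; unfold Cmult, Re, Im; simpl; ring. Qed.

Lemma exp_neg_Im_lt_1 tau : 0 < Im tau -> exp (-2 * PI * Im tau) < 1.
Proof. intros Hy; rewrite <- exp_0; apply exp_increasing; pose proof PI_RGT_0; nra. Qed.

Lemma exp_mult_nat (n : nat) x : exp (INR n * x) = exp x ^ n.
Proof.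
  induction n as [|n IH]; [simpl; rewrite Rmult_0_l; apply exp_0|].
  rewrite S_INR, Rmult_plus_distr_r, Rmult_1_l, exp_plus, IH; simpl; ring.
Qed.

Lemma eta_partial_qprod q N : eta_partial q N = (qprod q 0 N ^ 24)%C.
Proof.
  induction N as [|N IH]; [symmetry; apply Cpow_1_l|].
  cbn [eta_partial]; rewrite IH, qprod_S, Cpow_mult_l by lia; reflexivity.
Qed.

Lemma Delta_product_limit tau : 0 < Im tau -> exists eta,
  filterlim (qprod (qpar tau) 0) eventually (locally eta) /\ is_Delta tau (qpar tau * eta ^ 24)%C.
Proof.
  intros Hy.
  destruct (ex_lim_qprod0 _ _ (Cmod_qpar tau) (exp_neg_Im_lt_1 tau Hy)) as [eta Heta].
  exists eta; split; [exact Heta|].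
  apply filterlim_Cmult; [apply filterlim_const|].
  apply (filterlim_ext (fun N => qprod (qpar tau) 0 N ^ 24)%C);
    [intros N; symmetry; apply eta_partial_qprod | apply filterlim_Cpow, Heta].
Qed.

Lemma lower_base_bounds r : 0 < r <= 1 / 3 ->
  0 <= 1 - r - r ^ 2 - 2 * r ^ 2 / (1 - r) <= 1 - r / (1 - r).
Proof.
  intros Hr.
  replace (1 - r - r ^ 2 - 2 * r ^ 2 / (1 - r)) with ((1 - 2 * r - 2 * r ^ 2 + r ^ 3) / (1 - r))
    by (field; lra).
  replace (1 - r / (1 - r)) with ((1 - 2 * r) / (1 - r)) by (field; lra).
  assert (Hinv : 0 < / (1 - r)) by (apply Rinv_0_lt_compat; lra).
  unfold Rdiv; split; [apply Rmult_le_pos; nra | apply Rmult_le_compat_r; nra].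
Qed.

Lemma Delta_modulus_bounds tau : 0 < Im tau ->
  let r := exp (-2 * PI * Im tau) in
  exists D, is_Delta tau D /\
    (forall b, 0 <= b <= 1 - r / (1 - r) -> r * b ^ 24 <= Cmod D) /\
    Cmod D <= r * (1 + 2 * r + 2 * r ^ 4 / (1 - r ^ 2)) ^ 24.
Proof.
  intros Hy r; subst r.
  destruct (Delta_product_limit tau Hy) as [eta [Heta HDelta]].
  pose proof (Cmod_lim_qprod0_ge _ _ (Cmod_qpar tau) (exp_neg_Im_lt_1 tau Hy) eta Heta) as Hge.
  pose proof (Cmod_lim_qprod0_le _ _ (Cmod_qpar tau) (exp_neg_Im_lt_1 tau Hy) eta Heta) as Hle.
  pose proof (exp_pos (-2 * PI * Im tau)) as Hr.
  exists (qpar tau * eta ^ 24)%C; rewrite Cmod_mult, Cmod_pow, Cmod_qpar.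
  split; [exact HDelta | split].
  - intros b Hb; apply Rmult_le_compat_l, pow_incr; lra.
  - apply Rmult_le_compat_l, pow_incr; [lra | split; [apply Cmod_ge_0 | exact Hle]].
Qed.

Theorem proposition3p4 :
  (forall tau : C, 0 < Im tau -> exp (-2 * PI * Im tau) <= 1/3 ->
     exists D : C, is_Delta tau D /\
       Cmod D >= exp (-2 * PI * Im tau) *
         (1 - exp (-2 * PI * Im tau) - exp (-4 * PI * Im tau)
            - 2 * exp (-4 * PI * Im tau) / (1 - exp (-2 * PI * Im tau))) ^ 24)
  /\
  (forall tau : C, 0 < Im tau ->
     exists D : C, is_Delta tau D /\
       Cmod D <= exp (-2 * PI * Im tau) *
         (1 + 2 * exp (-2 * PI * Im tau)
            + 2 * exp (-8 * PI * Im tau) / (1 - exp (-4 * PI * Im tau))) ^ 24).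
Proof.
  split; intros tau Hy; [intros Hsmall|];
    destruct (Delta_modulus_bounds tau Hy) as [D [HD [Hlow Hup]]];
    exists D; split; try exact HD;
    replace (-4 * PI * Im tau) with (INR 2 * (-2 * PI * Im tau)) by (simpl; ring);
    rewrite exp_mult_nat.
  - apply Rle_ge, Hlow, lower_base_bounds; split; [apply exp_pos | exact Hsmall].
  - replace (-8 * PI * Im tau) with (INR 4 * (-2 * PI * Im tau)) by (simpl; ring).
    rewrite exp_mult_nat; exact Hup.
Qed.
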